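(* The Lie ideal $\operatorname{Im}\psi_0$ of the Lie algebra $\operatorname{Ker}\psi_1$ and the Lie ideal $\operatorname{Ad}_{E^e}(\Lambda)$ of $\operatorname{Der}_{E^e}(\Lambda)$ (inner derivations of $\Lambda$ which are $E$-bimodule morphisms) are isomorphic Lie algebras.
   Context: Let $k$ be an algebraically closed field and $Q$ a finite quiver; $Q_n$ is the set of paths of length $n$ ($Q_0$ = vertices, $Q_1$ = arrows), $s(\gamma),t(\gamma)$ are source and terminus of a path $\gamma$; in $kQ$, $\beta\alpha$ is the concatenation ''first $\alpha$, then $\beta$'' if $t(\alpha)=s(\beta)$, and $0$ otherwise. Let $Z$ be a minimal set of paths of length $\ge 2$ (no proper subpath of an element of $Z$ lies in $Z$) such that $\Lambda=kQ/\langle Z\rangle$ is finite dimensional; $E\subset\Lambda$ is the subalgebra spanned by the vertices. Let $B$ be the set of paths (vertices included) not containing any element of $Z$ as a subpath. Paths are parallel if they have the same source and terminus; $X//Y$ is the set of pairs of parallel paths in $X\times Y$ and $k(X//Y)$ the vector space with basis $X//Y$. For a path $\varepsilon$ and $(a,\gamma)\in Q_1//B$, $\varepsilon^{(a,\gamma)}$ is the sum of all paths in $B$ obtained by replacing one occurrence of $a$ in $\varepsilon$ by $\gamma$ ($0$ if none), and $(\eta,\varepsilon^{(a,\gamma)})=\sum_i(\eta,\varepsilon_i)$ if $\varepsilon^{(a,\gamma)}=\sum_i\varepsilon_i$. Maps: $\psi_0:k(Q_0//B)\to k(Q_1//B)$, $(e,\gamma)\mapsto\sum_{a\in Q_1,\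 s(a)=e,\ a\gamma\in B}(a,a\gamma)-\sum_{a\in Q_1,\ t(a)=e,\ \gamma a\in B}(a,\gamma a)$; $\psi_1:k(Q_1//B)\to k(Z//B)$, $(a,\gamma)\mapsto\sum_{p\in Z}(p,p^{(a,\gamma)})$. $k(Q_1//B)$ carries the bilinear bracket $[(a,\gamma),(b,\varepsilon)]=(b,\varepsilon^{(a,\gamma)})-(a,\gamma^{(b,\varepsilon)})$, for which $\operatorname{Ker}\psi_1$ is a Lie subalgebra and $\operatorname{Im}\psi_0$ a Lie ideal of it. *)

(* with multinomials' monoid algebras {malg k[K]}
   (finitely supported functions K -> k, an lmodType over k) used as the
   free vector spaces k(X) on the (countable) sets of paths / pairs of paths. *)
From HB Require Import structures.
From mathcomp Require Import all_boot all_order all_algebra.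
From mathcomp Require Import finmap.
From mathcomp Require Import monalg.
Set Implicit Arguments. Unset Strict Implicit. Unset Printing Implicit Defensive.
Import GRing.Theory.
Local Open Scope ring_scope.

Section QuiverAlgebra.
Variables (k : fieldType) (V A : finType) (src tgt : A -> V).

(* A path is a pair (starting vertex, list of arrows in traversal order);
   the trivial path at v (the vertex v) is (v, [::]). *)
Definition qpath := (V * seq A)%type.

Definition valid (p : qpath) : bool :=
  if p.2 is a :: q then (src a == p.1) && path.path (fun x y => tgt x == src y) a q
  else true.

Definition psrc (p : qpath) : V := p.1.
Definition ptgt (p : qpath) : V := foldl (fun _ a => tgt a) p.1 p.2.

(* comp b a = "b a" = first a, then b (meaningful when ptgt a = psrc b) *)
Definition comp (b a : qpath) : qpath := (a.1, a.2 ++ b.2).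
Definition vpath (v : V) : qpath := (v, [::]).
Definition apath (a : A) : qpath := (src a, [:: a]).

Definition visits (d : qpath) (v : V) : bool :=
  (d.1 == v) || has (fun a => tgt a == v) d.2.

Definition subpath (g d : qpath) : bool :=
  if g.2 is [::] then visits d g.1 else infix g.2 d.2.

Variable Z : seq qpath.

Definition inB (d : qpath) : bool := valid d && ~~ has (fun z => subpath z d) Z.

(* Lambda = kQ/<Z>, realised on its basis B: elements of {malg k[qpath]}
   supported in B, with the truncated path multiplication. *)
Definition Lam := {malg k[qpath]}.
Definition inLam (x : Lam) : Prop := forall d, d \in msupp x -> inB d.

Definition mulB (b a : qpath) : Lam :=
  if (ptgt a == psrc b) && inB (comp b a) then << comp b a >> else 0.
Definition lmul (x y : Lam) : Lam :=
  \sum_(b <- msupp x) \sum_(a <- msupp y) (x@_b * y@_a) *: mulB b a.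

Definition evert (v : V) : Lam := << vpath v >>.

Definition ad (m : Lam) : Lam -> Lam := fun y => lmul m y - lmul y m.

Definition Ebimod (D : Lam -> Lam) : Prop :=
  forall v y, inLam y ->
    D (lmul (evert v) y) = lmul (evert v) (D y) /\
    D (lmul y (evert v)) = lmul (D y) (evert v).

Definition inAdE (D : Lam -> Lam) : Prop :=
  exists m, [/\ inLam m, Ebimod (ad m) & forall y, inLam y -> D y = ad m y].

Definition Q0B := {malg k[(V * qpath)%type]}.
Definition Q1B := {malg k[(A * qpath)%type]}.
Definition inQ0B (g : Q0B) : Prop :=
  forall p, p \in msupp g -> [&& inB p.2, psrc p.2 == p.1 & ptgt p.2 == p.1].
Definition inQ1B (g : Q1B) : Prop :=
  forall p, p \in msupp g -> [&& inB p.2, psrc p.2 == src p.1 & ptgt p.2 == tgt p.1].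

Definition psi0_basis (p : V * qpath) : Q1B :=
  let: (e, g) := p in
  \sum_(a : A | (src a == e) && inB (comp (apath a) g)) << (a, comp (apath a) g) >>
  - \sum_(a : A | (tgt a == e) && inB (comp g (apath a))) << (a, comp g (apath a)) >>.
Definition psi0 (g : Q0B) : Q1B := \sum_(p <- msupp g) g@_p *: psi0_basis p.

Definition inImpsi0 (x : Q1B) : Prop := exists2 g, inQ0B g & x = psi0 g.

Definition repl (a : A) (g eps : qpath) : Lam :=
  \sum_(i < size eps.2 | nth a eps.2 i == a)
     (let r := (eps.1, take i eps.2 ++ g.2 ++ drop i.+1 eps.2) in
      if inB r then << r >> else 0).

Definition pairl (b : A) (x : Lam) : Q1B :=
  \sum_(d <- msupp x) x@_d *: << (b, d) >>.

Definition br_basis (p q : A * qpath) : Q1B :=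
  pairl q.1 (repl p.1 p.2 q.2) - pairl p.1 (repl q.1 q.2 p.2).

Definition bracket (x y : Q1B) : Q1B :=
  \sum_(p <- msupp x) \sum_(q <- msupp y) (x@_p * y@_q) *: br_basis p q.

End QuiverAlgebra.

(* Every element of Im psi0 has the form X(m) = sum_a (a, [m, a]) for a linear
   combination m of cycles of B (indeed psi0(e, g) = - X(g)), and these m are
   exactly the elements of Lambda whose inner derivation is an E-bimodule map,
   i.e. which commute with the vertices.  Let phi(x) be the derivation sending a
   path to the sum of its one-arrow replacements weighted by x.  By induction on
   the length of a path d, phi(X(m)) d = [m, d]: appending an arrow b to d adds the
   term [m, b] d, as in the Leibniz rule for ad m.  So phi maps Im psi0 onto
   Ad_{E^e}(Lambda), injectively because X(m) is recorded by the values [m, a] on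
   arrows, and [X(m1), X(m2)] = X([m1, m2]) makes it a morphism of Lie algebras. *)

From Pilot Require Import Defs.
From HB Require Import structures.
From mathcomp Require Import all_boot all_order all_algebra.
From mathcomp Require Import finmap.
From mathcomp Require Import monalg.
Set Implicit Arguments. Unset Strict Implicit. Unset Printing Implicit Defensive.
Import GRing.Theory.
Local Open Scope ring_scope.

Section LinearExtension.
Context {k : fieldType} {K : choiceType}.

Definition mext {M : lmodType k} (f : K -> M) (x : {malg k[K]}) : M :=
  \sum_(p <- msupp x) x@_p *: f p.

Section Target.
Context {M : lmodType k}.
Implicit Type f g : K -> M.

Lemma mextEw f (d : {fset K}) x : (msupp x `<=` d)%fset ->
  mext f x = \sum_(p <- d) x@_p *: f p.
Proof.
move=> le; rewrite /mext (big_fset_incl _ le) // => p _ /mcoeff_outdom ->.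
by rewrite scale0r.
Qed.

Lemma mextP f c x y : mext f (c *: x + y) = c *: mext f x + mext f y.
Proof.
pose d := (msupp x `|` msupp y)%fset.
have sub : (msupp (c *: x + y) `<=` d)%fset.
  by apply: fsubset_trans (msuppD_le _ _) _; exact: fsetSU (msuppZ_le _ _).
rewrite (mextEw f (fsubsetUl (msupp x) (msupp y))).
rewrite (mextEw f (fsubsetUr (msupp x) (msupp y))) (mextEw f sub).
rewrite scaler_sumr -big_split /=.
by apply: eq_bigr => p _; rewrite mcoeffD mcoeffZ scalerDl scalerA.
Qed.

Lemma mext_is_linear f : linear (mext f).
Proof. by move=> c x y; exact: mextP. Qed.

HB.instance Definition _ f :=
  GRing.isLinear.Build k {malg k[K]} M *:%R (mext f) (mext_is_linear f).

Lemma mextU f p : mext f << p >> = f p.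
Proof. by rewrite (mextEw f msuppU_le) big_seq_fset1 mcoeffUU scale1r. Qed.

Lemma eq_in_mext f g x : {in msupp x, f =1 g} -> mext f x = mext g x.
Proof. by move=> fg; rewrite /mext !big_seq; apply: eq_bigr => p /fg ->. Qed.

Lemma mext_add f g x : mext (fun p => f p + g p) x = mext f x + mext g x.
Proof. by rewrite /mext -big_split; apply: eq_bigr => p _; rewrite scalerDr. Qed.

Lemma mext_sub f g x : mext (fun p => f p - g p) x = mext f x - mext g x.
Proof. by rewrite /mext -sumrB; apply: eq_bigr => p _; rewrite scalerBr. Qed.

Lemma mext_zero x : mext (fun=> 0 : M) x = 0.
Proof. by rewrite /mext big1 // => p _; rewrite scaler0. Qed.

End Target.

Lemma mext_id (x : {malg k[K]}) : mext (fun p => << p >>) x = x.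
Proof.
rewrite [RHS]monalgE; apply: eq_bigr => p _.
by apply/malgP => q; rewrite mcoeffZ !mcoeffU mulr_natr.
Qed.

Lemma mcoeff_mext_restr (P : pred K) (x : {malg k[K]}) d : d \in msupp x ->
  (mext (fun p => if P p then << p >> else 0) x)@_d = if P d then x@_d else 0.
Proof.
move=> dx; rewrite raddf_sum (bigD1_seq d) ?fset_uniq //= big1 ?addr0.
  by rewrite mcoeffZ; case: (P d); rewrite ?mcoeffUU ?mcoeff0 ?mulr1 ?mulr0.
move=> p /negbTE pd; rewrite mcoeffZ; case: (P p); rewrite ?mcoeff0 ?mulr0 //.
by rewrite mcoeffU pd mulr0.
Qed.

End LinearExtension.

Section LinearExtensionComp.
Context {k : fieldType}.

Lemma mext_swap {K K' : choiceType} {M : lmodType k} (F : K -> K' -> M) x y :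
  mext (fun p => mext (F p) y) x = mext (fun q => mext (F^~ q) x) y.
Proof.
rewrite /mext; under eq_bigr do rewrite scaler_sumr.
rewrite exchange_big; apply: eq_bigr => q _; rewrite scaler_sumr.
by apply: eq_bigr => p _; rewrite !scalerA mulrC.
Qed.


Lemma linear_mext {K : choiceType} {M N : lmodType k} (h : {linear M -> N}) (f : K -> M) x :
  h (mext f x) = mext (fun p => h (f p)) x.
Proof. by rewrite linear_sum; apply: eq_bigr => p _; rewrite linearZ. Qed.

Lemma bilinear_mextl {K : choiceType} {U U' W : lmodType k} (h : {bilinear U -> U' -> W}) (f : K -> U) x z :
  h (mext f x) z = mext (fun p => h (f p) z) x.
Proof. by rewrite linear_sumlz; apply: eq_bigr => p _; rewrite linearZl_LR. Qed.

Lemma bilinear_mextr {K : choiceType} {U U' W : lmodType k} (h : {bilinear U -> U' -> W}) z (f : K -> U') x :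
  h z (mext f x) = mext (fun p => h z (f p)) x.
Proof. by rewrite linear_sumr; apply: eq_bigr => p _; rewrite linearZr_LR. Qed.

Lemma mext_comp {K K' : choiceType} {M : lmodType k} (f : K -> M) (g : K' -> {malg k[K]}) x :
  mext f (mext g x) = mext (fun p => mext f (g p)) x.
Proof. exact: linear_mext. Qed.

Lemma msupp_mext {K K' : choiceType} (P : pred K) (f : K' -> {malg k[K]}) x :
  (forall p, p \in msupp x -> {subset msupp (f p) <= P}) ->
  {subset msupp (mext f x) <= P}.
Proof.
move=> fP; rewrite /mext big_seq; elim/big_rec: _ => [|p y px yP d]; first by rewrite msupp0.
move/(fsubsetP (msuppD_le _ _)); rewrite in_fsetU => /orP[|/yP//].
by move/(fsubsetP (msuppZ_le _ _)); apply: fP.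
Qed.

End LinearExtensionComp.

Section QuiverAlgebra.
Variables (k : fieldType) (V A : finType) (src tgt : A -> V) (Z : seq (qpath V A)).
Hypothesis Z_long : all (fun z => 1 < size z.2)%N Z.

Local Notation Lam := (Lam k V A).
Local Notation inB := (inB src tgt Z).
Local Notation inLam := (inLam src tgt Z).
Local Notation ptgt := (ptgt tgt).
Local Notation comp := (@Defs.comp V A).
Local Notation mulB := (mulB k src tgt Z).
Local Notation lmul := (@lmul k V A src tgt Z).
Local Notation ad := (@ad k V A src tgt Z).
Local Notation evert := (evert k A).
Local Notation repl := (repl k src tgt Z).
Local Notation pairl := (@pairl k V A).
Local Notation Q1B := (Q1B k V A).
Local Notation Q0B := (Q0B k V A).
Local Notation bracket := (bracket src tgt Z).
Local Notation psi0_basis := (psi0_basis k src tgt Z).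
Local Notation psi0 := (psi0 src tgt Z).
Local Notation inQ0B := (inQ0B src tgt Z).
Local Notation inImpsi0 := (inImpsi0 src tgt Z).
Local Notation inAdE := (inAdE src tgt Z).

Fixpoint walk (v : V) (s : seq A) : bool :=
  if s is a :: s' then (src a == v) && walk (tgt a) s' else true.

Definition Zfree (s : seq A) : bool := ~~ has (fun z => infix z.2 s) Z.

Lemma valid_walk d : valid src tgt d = walk d.1 d.2.
Proof.
case: d => v [|a s] //=; congr andb.
by elim: s a => [|b s IH] a //=; rewrite IH eq_sym.
Qed.

Lemma ptgt_cat v s t : ptgt (v, s ++ t) = ptgt (ptgt (v, s), t).
Proof. exact: foldl_cat. Qed.

Lemma walk_cat v s t : walk v (s ++ t) = walk v s && walk (ptgt (v, s)) t.
Proof. by elim: s v => [|a s IH] v //=; rewrite IH andbA. Qed.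

(* Relations have length at least 2, so [subpath] is [infix] on arrow lists. *)
Lemma inBE d : inB d = walk d.1 d.2 && Zfree d.2.
Proof.
rewrite /Defs.inB valid_walk; congr (_ && ~~ _).
apply: eq_in_has => -[v [|a s]] zZ //.
by have := allP Z_long _ zZ.
Qed.

Lemma inB_catl v s t : inB (v, s ++ t) -> inB (v, s).
Proof.
rewrite !inBE /= walk_cat => /andP[/andP[-> _]]; apply: contra.
by apply: sub_has => z; apply: infix_catr.
Qed.

Lemma inB_catr v s t : inB (v, s ++ t) -> inB (ptgt (v, s), t).
Proof.
rewrite !inBE /= walk_cat => /andP[/andP[_ ->]]; apply: contra.
by apply: sub_has => z; apply: infix_catl.
Qed.

Lemma inB_vpath v : inB (vpath A v).
Proof.
rewrite inBE; apply/hasPn => -[w [|b s]] zZ //=.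
by have := allP Z_long _ zZ.
Qed.

Lemma inB_apath a : inB (apath src a).
Proof.
rewrite inBE /= eqxx; apply/hasPn => -[w [|b [|c s]]] zZ //=;
  have := allP Z_long _ zZ => //= _.
by rewrite andbF.
Qed.

Lemma inB_rcons v s b : inB (v, rcons s b) -> inB (v, s) /\ src b = ptgt (v, s).
Proof.
move=> Bsb; split; first by move: Bsb; rewrite -cats1; apply: inB_catl.
by move: Bsb; rewrite inBE -cats1 walk_cat /= => /andP[/andP[_ /andP[/eqP]]].
Qed.

Lemma comp_assoc c b a : comp c (comp b a) = comp (comp c b) a.
Proof. by rewrite /comp /= catA. Qed.

Lemma psrc_comp b a : psrc (comp b a) = psrc a.
Proof. by []. Qed.

Lemma ptgt_comp b a : ptgt a = psrc b -> ptgt (comp b a) = ptgt b.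
Proof. by case: a b => v s [w t]; rewrite /comp ptgt_cat /= => ->. Qed.

Lemma inB_compl b a : inB (comp b a) -> inB a.
Proof. by case: a => v s; apply: inB_catl. Qed.

Lemma inB_compr b a : inB (comp b a) -> ptgt a = psrc b -> inB b.
Proof. by case: a b => v s [w t] /= /inB_catr + ab; rewrite ab. Qed.

Lemma lmulE x y : lmul x y = mext (fun b => mext (mulB b) y) x.
Proof.
rewrite /lmul /mext; apply: eq_bigr => b _; rewrite scaler_sumr.
by apply: eq_bigr => a _; rewrite scalerA.
Qed.

Lemma lmulUU b a : lmul << b >> << a >> = mulB b a.
Proof. by rewrite lmulE !mextU. Qed.

Lemma lmul_expandr x y : lmul x y = mext (fun a => lmul x << a >>) y.
Proof.
rewrite lmulE mext_swap; apply: eq_in_mext => a _.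
by rewrite lmulE; apply: eq_in_mext => b _; rewrite mextU.
Qed.

Lemma lmul_expandl x y : lmul x y = mext (fun b => lmul << b >> y) x.
Proof. by rewrite lmulE; apply: eq_in_mext => b _; rewrite lmulE mextU. Qed.

Lemma lmul_is_bilinear : bilinear_for *:%R *:%R lmul.
Proof.
split=> [y | x] c u v /=; first by rewrite !lmulE; exact: linearP.
by rewrite !(lmul_expandr x); exact: linearP.
Qed.

HB.instance Definition _ :=
  bilinear_isBilinear.Build k Lam Lam Lam *:%R *:%R lmul lmul_is_bilinear.

Lemma mulB_assoc b a c : lmul (mulB b a) << c >> = lmul << b >> (mulB a c).
Proof.
rewrite /mulB (fun_if (lmul^~ _)) (fun_if (lmul _)) linear0l linear0r !lmulUU /mulB.
rewrite -comp_assoc psrc_comp.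
have [ca|_] := eqVneq (ptgt c) (psrc a); last by rewrite /= if_same.
rewrite ptgt_comp //=.
have [ab|_] := eqVneq (ptgt a) (psrc b); last by rewrite /= if_same.
case Bba: (inB (comp b a)); case Bac: (inB (comp a c)) => //=.
- by case: ifP => // /inB_compl; rewrite Bac.
- by case: ifP => //; rewrite comp_assoc => /inB_compr/(_ ca); rewrite Bba.
Qed.

Lemma lmulA x y z : lmul (lmul x y) z = lmul x (lmul y z).
Proof.
rewrite (lmul_expandl x y) (bilinear_mextl lmul) /= [RHS]lmul_expandl; apply: eq_in_mext => b _.
rewrite (lmul_expandr _ y) (bilinear_mextl lmul) /= (lmul_expandl y z) (bilinear_mextr lmul) /=.
apply: eq_in_mext => a _; rewrite lmulUU (lmul_expandr _ z) (lmul_expandr << a >> z).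
by rewrite (bilinear_mextr lmul) /=; apply: eq_in_mext => c _; rewrite mulB_assoc lmulUU.
Qed.

Lemma ad_is_bilinear : bilinear_for *:%R *:%R ad.
Proof.
by split=> [y | m] c u v; rewrite /Defs.ad /= linearPl linearPr scalerBr opprD addrACA.
Qed.

HB.instance Definition _ :=
  bilinear_isBilinear.Build k Lam Lam Lam *:%R *:%R ad ad_is_bilinear.

Lemma ad_lmul m x y : ad m (lmul x y) = lmul (ad m x) y + lmul x (ad m y).
Proof. by rewrite /Defs.ad linearBl linearBr /= !lmulA addrA subrK. Qed.

Lemma ad_ad m1 m2 y : ad m1 (ad m2 y) = ad (ad m1 m2) y + ad m2 (ad m1 y).
Proof.
rewrite [ad m2 y]/Defs.ad linearBr /= !ad_lmul [lmul (ad m1 y) m2 + _]addrC opprD.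
by rewrite addrACA.
Qed.

Lemma ad_commutator m1 m2 y : ad (ad m1 m2) y = ad m1 (ad m2 y) - ad m2 (ad m1 y).
Proof. by rewrite ad_ad addrK. Qed.

Lemma inLamU d : inB d -> inLam (<< d >> : Lam).
Proof. by move=> Bd p /(fsubsetP msuppU_le); rewrite inE => /eqP ->. Qed.

Lemma inLam_mulB b a : inLam (mulB b a).
Proof. by rewrite /mulB; case: ifP => [/andP[_ /inLamU] // | _ d]; rewrite msupp0. Qed.

Lemma inLam_lmul x y : inLam (lmul x y).
Proof.
rewrite lmulE; apply: (msupp_mext (P := inB)) => b _.
by apply: (msupp_mext (P := inB)) => a _; apply: inLam_mulB.
Qed.

Lemma inLam_ad m y : inLam (ad m y).
Proof.
by move=> d /(fsubsetP (msuppB_le _ _)); rewrite in_fsetU => /orP[] /inLam_lmul.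
Qed.

Definition cycle_comb (m : Lam) : Prop := forall d, d \in msupp m -> psrc d = ptgt d.

Lemma msupp_mulB b a d : d \in msupp (mulB b a) -> ptgt a = psrc b /\ d = comp b a.
Proof.
rewrite /mulB; case: ifP => [/andP[/eqP ab _] | _]; last by rewrite msupp0.
by move/(fsubsetP msuppU_le); rewrite inE => /eqP.
Qed.

Lemma cycle_combB m1 m2 : cycle_comb m1 -> cycle_comb m2 -> cycle_comb (m1 - m2).
Proof.
move=> c1 c2 d /(fsubsetP (msuppB_le _ _)); rewrite in_fsetU => /orP[/c1 | /c2] //.
Qed.

Lemma cycle_comb_lmul x y : cycle_comb x -> cycle_comb y -> cycle_comb (lmul x y).
Proof.
move=> cx cy d dxy; apply/eqP; move: d dxy; rewrite lmulE.
apply: (msupp_mext (P := [pred d | psrc d == ptgt d])) => b /cx cb.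
apply: msupp_mext => a /cy ca d /msupp_mulB[ab ->].
by rewrite inE psrc_comp ptgt_comp // ca ab cb.
Qed.

Lemma cycle_comb_ad m1 m2 : cycle_comb m1 -> cycle_comb m2 -> cycle_comb (ad m1 m2).
Proof. by move=> c1 c2; apply: cycle_combB; apply: cycle_comb_lmul. Qed.

Lemma mulB_vpathl v a : mulB (vpath A v) a = if (ptgt a == v) && inB a then << a >> else 0.
Proof. by case: a => u s; rewrite /mulB /Defs.comp /= cats0. Qed.

Lemma mulB_vpathr b v : mulB b (vpath A v) = if (psrc b == v) && inB b then << b >> else 0.
Proof.
case: b => u s; rewrite /mulB /Defs.comp /psrc /=.
by have [->|] := eqVneq u v; rewrite ?eqxx // eq_sym => /negbTE ->.
Qed.

Lemma lmul_evertl v x :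
  lmul (evert v) x = mext (fun a => if (ptgt a == v) && inB a then << a >> else 0) x.
Proof. by rewrite lmul_expandr; apply: eq_in_mext => a _; rewrite lmulUU mulB_vpathl. Qed.

Lemma lmul_evertr x v :
  lmul x (evert v) = mext (fun b => if (psrc b == v) && inB b then << b >> else 0) x.
Proof. by rewrite lmul_expandl; apply: eq_in_mext => b _; rewrite lmulUU mulB_vpathr. Qed.

Lemma evert_idem v : lmul (evert v) (evert v) = evert v.
Proof. by rewrite lmulUU mulB_vpathl eqxx inB_vpath. Qed.

Lemma ad_evert m v : cycle_comb m -> ad m (evert v) = 0.
Proof.
move=> cm; apply/eqP; rewrite subr_eq0 lmul_evertl lmul_evertr; apply/eqP.
by apply: eq_in_mext => d /cm ->.
Qed.

Lemma ad_evert_cycle_comb m : inLam m -> (forall v, ad m (evert v) = 0) -> cycle_comb m.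
Proof.
move=> Bm cm d dm; have /eqP := cm (psrc d); rewrite subr_eq0 => /eqP.
move/(congr1 (mcoeff d)); rewrite lmul_evertl lmul_evertr !mcoeff_mext_restr //.
rewrite eqxx (Bm _ dm) andbT; case: eqP => // _ /eqP.
by rewrite mcoeff_eq0 dm.
Qed.

Lemma Ebimod_ad_evert m v : Ebimod src tgt Z (ad m) -> ad m (evert v) = 0.
Proof.
move=> Em; have [El Er] := Em v (evert v) (inLamU (inB_vpath v)).
have := ad_lmul m (evert v) (evert v).
rewrite -{1}El -Er !evert_idem -{1}[ad m (evert v)]addr0.
by move/addrI/esym.
Qed.

Lemma Ebimod_adP m : inLam m -> Ebimod src tgt Z (ad m) <-> cycle_comb m.
Proof.
move=> Bm; split=> [Em | cm v y _].
  by apply: ad_evert_cycle_comb => // v; apply: Ebimod_ad_evert.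
by rewrite !ad_lmul ad_evert // linear0l linear0r /= add0r addr0.
Qed.

Definition lpath (r : qpath V A) : Lam := if inB r then << r >> else 0.

Lemma lmul_apath_lpath b v s :
  lmul << apath src b >> (lpath (v, s)) = lpath (v, rcons s b).
Proof.
rewrite /lpath; case: ifP => Bs; last first.
  by rewrite linear0r /=; case: ifP => // /inB_rcons[]; rewrite Bs.
rewrite lmulUU /mulB /Defs.comp /= cats1.
case Bsb: (inB (v, rcons s b)); rewrite ?andbF ?andbT //.
by have [_ <-] := inB_rcons Bsb; rewrite eqxx.
Qed.

Lemma replE a u v t : repl a u (v, t) =
  \sum_(i < size t | nth a t i == a) lpath (v, take i t ++ u.2 ++ drop i.+1 t).
Proof. by []. Qed.

Lemma repl_rcons a u v s b : psrc u = src a -> inB (v, rcons s b) ->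
  repl a u (v, rcons s b) =
  lmul << apath src b >> (repl a u (v, s)) + (if a == b then mulB u (v, s) else 0).
Proof.
move=> ua Bsb; rewrite !replE size_rcons big_mkcond big_ord_recr /=.
congr (_ + _).
  rewrite linear_sumr /= [RHS]big_mkcond; apply: eq_bigr => i _ /=.
  have lt_is := ltn_ord i.
  rewrite nth_rcons lt_is; case: eqP => // _.
  rewrite lmul_apath_lpath (drop_rcons lt_is) -cats1 takel_cat 1?ltnW //.
  by rewrite !rcons_cat.
rewrite nth_rcons ltnn eqxx eq_sym -cats1 take_size_cat // drop_oversize ?size_cat ?addn1 //.
case: eqP => // ab; have [_ sb] := inB_rcons Bsb.
by rewrite cats0 /mulB /lpath /Defs.comp /= -sb ua ab eqxx.
Qed.

Definition der_path (x : Q1B) (d : qpath V A) : Lam := mext (fun p => repl p.1 p.2 d) x.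

(* [der] and [ad_arrows] are locked: otherwise matching, e.g., [ad_arrows m1]
   against [ad_arrows m2] during rewriting unfolds them, which is very slow. *)
Definition der_def (x : Q1B) : Lam -> Lam := mext (der_path x).
Fact der_key : unit. Proof. by []. Qed.
Definition der := locked_with der_key der_def.
Canonical der_unlockable := [unlockable fun der].

Lemma derE x l : der x l = mext (der_path x) l.
Proof. by rewrite unlock. Qed.

Definition ad_arrows_def (m : Lam) : Q1B := \sum_(a : A) pairl a (ad m << apath src a >>).
Fact ad_arrows_key : unit. Proof. by []. Qed.
Definition ad_arrows := locked_with ad_arrows_key ad_arrows_def.
Canonical ad_arrows_unlockable := [unlockable fun ad_arrows].

Lemma ad_arrowsE m : ad_arrows m = \sum_(a : A) pairl a (ad m << apath src a >>).
Proof. by rewrite unlock. Qed.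

Lemma pairlE a w : pairl a w = mext (fun d => << (a, d) >>) w.
Proof. by []. Qed.

Lemma pairl_is_linear a : linear (pairl a).
Proof. exact: mext_is_linear. Qed.

HB.instance Definition _ a :=
  GRing.isLinear.Build k Lam Q1B *:%R (pairl a) (pairl_is_linear a).

Lemma pairlB a x y : pairl a (x - y) = pairl a x - pairl a y.
Proof. exact: linearB. Qed.

Lemma der_is_linear l : linear (der^~ l).
Proof.
have swap x : der x l = mext (fun p => mext (repl p.1 p.2) l) x.
  by rewrite derE; exact: esym (mext_swap (fun p d => repl p.1 p.2 d) x l).
by move=> c x y; rewrite !swap; exact: linearP.
Qed.

Lemma der_path_pairl a w d : der_path (pairl a w) d = mext (repl a ^~ d) w.
Proof. by rewrite /der_path linear_mext; apply: eq_in_mext => u _; exact: mextU. Qed.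

Lemma der_path_ad_arrowsE m d :
  der_path (ad_arrows m) d = \sum_(a : A) mext (repl a ^~ d) (ad m << apath src a >>).
Proof.
by rewrite ad_arrowsE /der_path linear_sum; apply: eq_bigr => a _; apply: der_path_pairl.
Qed.

Lemma ad_apath_psrc m : cycle_comb m ->
  forall a, {in msupp (ad m << apath src a >>), forall u, psrc u = src a}.
Proof.
move=> cm a; pose P := [pred u : qpath V A | psrc u == src a].
have sub_l : {subset msupp (lmul m << apath src a >>) <= P}.
  rewrite lmul_expandl; apply: msupp_mext => b _ u.
  by rewrite lmulUU => /msupp_mulB[_ ->]; rewrite inE psrc_comp.
have sub_r : {subset msupp (lmul << apath src a >> m) <= P}.
  rewrite lmul_expandr; apply: msupp_mext => b /cm cb u.
  by rewrite lmulUU => /msupp_mulB[ba ->]; rewrite inE psrc_comp cb ba.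
move=> u /(fsubsetP (msuppB_le _ _)); rewrite in_fsetU => /orP[/sub_l | /sub_r] /eqP //.
Qed.

Lemma mext_repl_rcons a w v s b :
  {in msupp w, forall u, psrc u = src a} -> inB (v, rcons s b) ->
  mext (repl a ^~ (v, rcons s b)) w =
  lmul << apath src b >> (mext (repl a ^~ (v, s)) w) +
  (if a == b then lmul w << (v, s) >> else 0).
Proof.
move=> wa Bsb; transitivity (mext (fun u => lmul << apath src b >> (repl a u (v, s)) +
                                     (if a == b then mulB u (v, s) else 0)) w).
  by apply: eq_in_mext => u /wa ua; rewrite repl_rcons.
rewrite mext_add (bilinear_mextr lmul) /=; congr (_ + _).
case: eqP => _; last exact: mext_zero.
by rewrite lmul_expandl; apply: eq_in_mext => u _; rewrite lmulUU.
Qed.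

Lemma der_path_ad_arrows m d : cycle_comb m -> inB d ->
  der_path (ad_arrows m) d = ad m << d >>.
Proof.
move=> cm; case: d => v s; elim/last_ind: s => [|s b IH] Bsb.
  rewrite der_path_ad_arrowsE big1 ?ad_evert // => a _.
  rewrite -(mext_zero (ad m << apath src a >>)).
  by apply: eq_in_mext => u _; rewrite replE big_ord0.
have [Bs _] := inB_rcons Bsb.
rewrite der_path_ad_arrowsE.
under eq_bigr => a _ do rewrite (mext_repl_rcons (ad_apath_psrc cm (a := a)) Bsb).
rewrite big_split /= -linear_sumr /= -der_path_ad_arrowsE IH //.
rewrite -big_mkcond big_pred1_eq.
have -> : << (v, rcons s b) >> = lmul << apath src b >> << (v, s) >> :> Lam.
  by have := lmul_apath_lpath b v s; rewrite /lpath Bs Bsb.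
by rewrite ad_lmul addrC.
Qed.

Lemma der_ad_arrows m l : cycle_comb m -> inLam l -> der (ad_arrows m) l = ad m l.
Proof.
move=> cm Bl; rewrite derE -[in RHS](mext_id l) (bilinear_mextr ad) /=.
by apply: eq_in_mext => d /Bl; apply: der_path_ad_arrows.
Qed.

Lemma ad_arrows_is_linear : linear ad_arrows.
Proof.
move=> c m1 m2; rewrite !ad_arrowsE scaler_sumr -big_split; apply: eq_bigr => a _ /=.
by rewrite linearPl /= linearP.
Qed.

HB.instance Definition _ :=
  GRing.isLinear.Build k Lam Q1B *:%R ad_arrows ad_arrows_is_linear.

Lemma ad_arrows_der m : cycle_comb m ->
  ad_arrows m = \sum_(a : A) pairl a (der (ad_arrows m) << apath src a >>).
Proof.
move=> cm; rewrite {1}ad_arrowsE; apply: eq_bigr => a _.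
by rewrite der_ad_arrows //; apply/inLamU/inB_apath.
Qed.

Definition der_act (x : Q1B) : Q1B -> Q1B := mext (fun q => pairl q.1 (der_path x q.2)).

Lemma bracket_der_act x y : bracket x y = der_act x y - der_act y x.
Proof.
have E1 : mext (fun p => mext (fun q => pairl q.1 (repl p.1 p.2 q.2)) y) x = der_act x y.
  by rewrite mext_swap; apply: eq_in_mext => q _; rewrite /der_path linear_mext /=.
have E2 : mext (fun p => mext (fun q => pairl p.1 (repl q.1 q.2 p.2)) y) x = der_act y x.
  rewrite /der_act; apply: eq_in_mext => p _.
  by rewrite /der_path [RHS]linear_mext /=; apply: eq_in_mext.
rewrite -E1 -E2 -mext_sub /Defs.bracket /mext; apply: eq_bigr => p _.
rewrite -sumrB scaler_sumr; apply: eq_bigr => q _.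
by rewrite -scalerBr scalerA.
Qed.

Lemma der_act_ad_arrows x m :
  der_act x (ad_arrows m) = \sum_(a : A) pairl a (der x (ad m << apath src a >>)).
Proof.
rewrite /der_act ad_arrowsE linear_sum /=; apply: eq_bigr => a _.
rewrite pairlE mext_comp derE [RHS]linear_mext /=.
by apply: eq_in_mext => d _; rewrite mextU.
Qed.

Lemma bracket_ad_arrows m1 m2 : cycle_comb m1 -> cycle_comb m2 ->
  bracket (ad_arrows m1) (ad_arrows m2) = ad_arrows (ad m1 m2).
Proof.
move=> c1 c2; rewrite bracket_der_act !der_act_ad_arrows -sumrB [RHS]ad_arrowsE.
apply: eq_bigr => a _.
rewrite (der_ad_arrows c1 (@inLam_ad m2 _)) (der_ad_arrows c2 (@inLam_ad m1 _)).
by rewrite -pairlB ad_commutator.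
Qed.

Lemma pairl_if a (c : bool) q :
  pairl a (if c then << q >> else 0) = if c then << (a, q) >> else 0.
Proof. by rewrite pairlE; case: c; rewrite ?mextU ?linear0. Qed.

Lemma psi0_basis_ad_arrows e g : psrc g = e -> ptgt g = e ->
  psi0_basis (e, g) = - ad_arrows << g >>.
Proof.
move=> ge te; rewrite ad_arrowsE /Defs.psi0_basis.
under [in RHS]eq_bigr => a _ do rewrite /Defs.ad pairlB !lmulUU.
rewrite sumrB opprB; congr (_ - _); rewrite big_mkcond; apply: eq_bigr => a _.
  by rewrite /mulB pairl_if te eq_sym.
by rewrite /mulB pairl_if ge.
Qed.

Lemma psi0E g : inQ0B g -> psi0 g = ad_arrows (mext (fun p => - << p.2 >>) g).
Proof.
move=> Qg; rewrite (linear_mext ad_arrows) -[psi0 g]/(mext psi0_basis g).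
apply: eq_in_mext => -[e d] /Qg /and3P[_ /eqP de /eqP te].
by rewrite psi0_basis_ad_arrows //; exact: esym (linearN ad_arrows _).
Qed.

Lemma inImpsi0P x : inImpsi0 x <-> exists m, [/\ cycle_comb m, inLam m & x = ad_arrows m].
Proof.
split=> [[g Qg ->] | [m [cm Bm ->]]].
  pose m := mext (fun p => - << p.2 >>) g.
  have sub : {subset msupp m <= [pred d | inB d && (psrc d == ptgt d)]}.
    apply: msupp_mext => -[e d] /Qg /and3P[Bd /eqP de /eqP te] u.
    by rewrite msuppN => /(fsubsetP msuppU_le); rewrite !inE => /eqP ->; rewrite Bd de te /=.
  exists m; split; last exact: psi0E.
    by move=> d /sub /andP[_ /eqP].
  by move=> d /sub /andP[].
pose g : Q0B := mext (fun d => - << (psrc d, d) >>) m.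
have Qg : inQ0B g.
  apply: (msupp_mext (P := [pred p | [&& inB p.2, psrc p.2 == p.1 & ptgt p.2 == p.1]])).
  move=> d dm p; rewrite msuppN => /(fsubsetP msuppU_le); rewrite inE => /eqP -> /=.
  by rewrite inE /= (Bm _ dm) eqxx (cm _ dm) eqxx.
exists g => //; rewrite psi0E //; congr ad_arrows.
rewrite mext_comp -{1}[m]mext_id; apply: eq_in_mext => d _.
by rewrite (linearN (mext _)) /= (mextU (fun p : V * qpath V A => - << p.2 >> : Lam)) opprK.
Qed.

Lemma der_inj_Impsi0 x y : inImpsi0 x -> inImpsi0 y ->
  (forall l, inLam l -> der x l = der y l) -> x = y.
Proof.
move=> /inImpsi0P[m1 [c1 _ ->]] /inImpsi0P[m2 [c2 _ ->]] eq_der.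
rewrite (ad_arrows_der c1) (ad_arrows_der c2); apply: eq_bigr => a _.
by rewrite eq_der //; apply/inLamU/inB_apath.
Qed.

Lemma der_Impsi0_inAdE x : inImpsi0 x -> inAdE (der x).
Proof.
move=> /inImpsi0P[m [cm Bm ->]]; exists m; split=> //; first exact/Ebimod_adP.
by move=> l; apply: der_ad_arrows.
Qed.

Lemma inAdE_der_Impsi0 D : inAdE D ->
  exists2 x, inImpsi0 x & forall l, inLam l -> der x l = D l.
Proof.
move=> [m [Bm /(Ebimod_adP Bm) cm Dm]].
exists (ad_arrows m); first by apply/inImpsi0P; exists m.
by move=> l Bl; rewrite der_ad_arrows // Dm.
Qed.

Lemma der_bracket x y : inImpsi0 x -> inImpsi0 y -> forall l, inLam l ->
  der (bracket x y) l = der x (der y l) - der y (der x l).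
Proof.
move=> /inImpsi0P[m1 [c1 _ ->]] /inImpsi0P[m2 [c2 _ ->]] l Bl.
rewrite bracket_ad_arrows // (der_ad_arrows (cycle_comb_ad c1 c2) Bl) ad_commutator.
rewrite (der_ad_arrows c2 Bl) (der_ad_arrows c1 Bl).
by rewrite (der_ad_arrows c1 (@inLam_ad m2 l)) (der_ad_arrows c2 (@inLam_ad m1 l)).
Qed.

End QuiverAlgebra.

Theorem corollary1p9 (k : closedFieldType) (V A : finType) (src tgt : A -> V)
  (Z : seq (qpath V A)) :
  uniq Z ->
  all (valid src tgt) Z ->
  all (fun z => 1 < size z.2)%N Z ->
  (forall z z', z \in Z -> z' \in Z -> subpath tgt z' z -> z' = z) ->
  (exists s : seq (qpath V A), forall d, inB src tgt Z d -> d \in s) ->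
  exists phi : Q1B k V A -> Lam k V A -> Lam k V A,
    [/\ (forall (c : k) x y, inImpsi0 src tgt Z x -> inImpsi0 src tgt Z y ->
           forall l, inLam src tgt Z l -> phi (c *: x + y) l = c *: phi x l + phi y l),
        (forall x y, inImpsi0 src tgt Z x -> inImpsi0 src tgt Z y ->
           (forall l, inLam src tgt Z l -> phi x l = phi y l) -> x = y),
        (forall x, inImpsi0 src tgt Z x -> inAdE src tgt Z (phi x)),
        (forall D, inAdE src tgt Z D ->
           exists2 x, inImpsi0 src tgt Z x &
             forall l, inLam src tgt Z l -> phi x l = D l) &
        (forall x y, inImpsi0 src tgt Z x -> inImpsi0 src tgt Z y ->
           forall l, inLam src tgt Z l ->
             phi (bracket src tgt Z x y) l = phi x (phi y l) - phi y (phi x l))].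
Proof.
move=> _ _ Z_long _ _; exists (der src tgt Z); split.
- by move=> c x y _ _ l _; apply: der_is_linear.
- exact: der_inj_Impsi0.
- exact: der_Impsi0_inAdE.
- exact: inAdE_der_Impsi0.
- exact: der_bracket.
Qed.
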